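(* Let $\alpha$ be a nonzero real number. Let $\gamma(t)=\Psi(u(t),v(t))$ be an $\alpha$-stationary curve in $\mathbb H^2$ which is not of constant curvature, parametrized by arc length $t$ and not passing through $N$. Then there is a constant $c>0$ such that, expressing $t$ and $v$ as functions of $u$, $$t(u)=\pm\int^u\frac{s^\alpha\sinh(s)}{\sqrt{s^{2\alpha}\sinh^2(s)-c^2}}\,ds,\qquad v(u)=\pm\int^u\frac{c}{\sinh(s)\sqrt{s^{2\alpha}\sinh^2(s)-c^2}}\,ds.$$
   Context: The hyperbolic plane is $\mathbb H^2=\{(x,y,z):x^2+y^2-z^2=-1,\ z>0\}$ with the metric induced by the Lorentzian inner product $\langle x,y\rangle_\epsilon=x_1y_1+x_2y_2-x_3y_3$. It is parametrized by $\Psi(u,v)=(\sinh u\cos v,\sinh u\sin v,\cosh u)$, and $N=(0,0,1)$. The hyperbolic distance from $\Psi(u,v)$ to $N$ is $u$, and the line element is $\sqrt{u'^2+\sinh^2(u)v'^2}\,dt$. The energy of a curve $\gamma(t)=\Psi(u(t),v(t))$ with $u>0$ is $$E_\alpha[\gamma]=\int u^\alpha\sqrt{u'^2+\sinh^2(u)v'^2}\,dt.$$ The curve is $\alpha$-stationary if it is a critical point of $E_\alpha$, i.e. $(u,v)$ satisfies its Euler–Lagrange equations. Equivalently, its geodesic curvature satisfies $\kappa=\alpha\langle\mathbf n,\xi\rangle_\epsilon/u$, where $\mathbf n$ is the unit normal and $\xi=\Psi_u$. Throughout the paper, $\alpha\ne0$ and curves avoid $N$. Integrals $\int^u$ are indefinite,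 i.e. determined up to additive constants. *)

From Stdlib Require Import Reals.
From Coquelicot Require Import Coquelicot.
Open Scope R_scope.

Definition in_I (a b : Rbar) (t : R) : Prop := Rbar_lt a t /\ Rbar_lt t b.

Definition C2_on (a b : Rbar) (f : R -> R) : Prop :=
  forall t, in_I a b t -> ex_derive f t /\ ex_derive (Derive f) t.

Definition speed (u v : R -> R) (t : R) : R :=
  sqrt ((Derive u t) ^ 2 + (sinh (u t)) ^ 2 * (Derive v t) ^ 2).

Definition arc_length (a b : Rbar) (u v : R -> R) : Prop :=
  forall t, in_I a b t -> speed u v t = 1.

(* Euler-Lagrange equations of the Lagrangian
     L(u,v,u',v') = u^alpha * sqrt(u'^2 + sinh(u)^2 v'^2)
   (u^alpha = Rpower u alpha, u > 0):
     d/dt (dL/du') = dL/du,   d/dt (dL/dv') = dL/dv = 0. *)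
Definition alpha_stationary (alpha : R) (a b : Rbar) (u v : R -> R) : Prop :=
  forall t, in_I a b t ->
    is_derive (fun s => Rpower (u s) alpha * Derive u s / speed u v s) t
      (alpha * Rpower (u t) (alpha - 1) * speed u v t
       + Rpower (u t) alpha * sinh (u t) * cosh (u t) * (Derive v t) ^ 2
         / speed u v t)
    /\
    is_derive (fun s => Rpower (u s) alpha * (sinh (u s)) ^ 2 * Derive v s
                        / speed u v s) t 0.

(* The curve gamma = Psi(u, v) in R^3 (components). *)
Definition gam1 (u v : R -> R) (t : R) : R := sinh (u t) * cos (v t).
Definition gam2 (u v : R -> R) (t : R) : R := sinh (u t) * sin (v t).
Definition gam3 (u v : R -> R) (t : R) : R := cosh (u t).

Definition det3 (x1 x2 x3 y1 y2 y3 z1 z2 z3 : R) : R :=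
  x1 * (y2 * z3 - y3 * z2) - x2 * (y1 * z3 - y3 * z1) + x3 * (y1 * z2 - y2 * z1).

(* Geodesic curvature of an arc-length parametrized curve gamma in H^2:
   kappa = <gamma'', n>_eps with unit normal n = gamma (x)_eps gamma'
   (Lorentzian cross product, characterized by <x (x)_eps y, z>_eps = det(x,y,z)),
   hence kappa = det(gamma, gamma', gamma''). *)
Definition geod_curv (u v : R -> R) (t : R) : R :=
  det3 (gam1 u v t) (gam2 u v t) (gam3 u v t)
       (Derive (gam1 u v) t) (Derive (gam2 u v) t) (Derive (gam3 u v) t)
       (Derive (Derive (gam1 u v)) t) (Derive (Derive (gam2 u v)) t)
       (Derive (Derive (gam3 u v)) t).

Definition constant_curvature (a b : Rbar) (u v : R -> R) : Prop :=
  exists k, forall t, in_I a b t -> geod_curv u v t = k.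

From Stdlib Require Import Reals Lra Classical.
From Coquelicot Require Import Coquelicot.
Open Scope R_scope.

(* The Euler-Lagrange equation in v says that c = u^alpha sinh(u)^2 v' is a
   first integral (the curve is a critical point of a rotationally invariant
   energy).  If c = 0 then v is constant and gamma is a geodesic, of curvature
   0; if u' vanished identically, u would be constant and gamma a circle of
   constant curvature.  Otherwise the arc-length condition
   u'^2 + sinh(u)^2 v'^2 = 1 becomes
   u'^2 = (u^(2 alpha) sinh(u)^2 - c^2) / (u^(2 alpha) sinh(u)^2),
   and on an interval where u' does not vanish it has constant sign, so
   dt/du = 1/u' and dv/du = v'/u' are the claimed integrands. *)

Section Interval.

Variables a b : Rbar.

Lemma in_I_nonempty : Rbar_lt a b -> exists t, in_I a b t.
Proof.
  destruct a as [a'| |], b as [b'| |]; simpl; intros Hab; try contradiction.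
  - exists ((a' + b') / 2); split; simpl; lra.
  - exists (a' + 1); split; simpl; auto; lra.
  - exists (b' - 1); split; simpl; auto; lra.
  - exists 0; split; simpl; auto.
Qed.

Lemma in_I_sub (p q t : R) : Rbar_le a p -> Rbar_le q b -> p < t < q -> in_I a b t.
Proof.
  intros Hap Hqb Ht; split.
  - apply (Rbar_le_lt_trans a p t Hap); simpl; lra.
  - apply (Rbar_lt_le_trans t q b); [simpl; lra | exact Hqb].
Qed.

Lemma in_I_between (s t x : R) :
  in_I a b s -> in_I a b t -> Rmin s t <= x <= Rmax s t -> in_I a b x.
Proof.
  intros Hs Ht Hx.
  destruct (Rle_dec s t).
  - rewrite Rmin_left, Rmax_right in Hx by lra.
    split; [apply (Rbar_lt_le_trans _ s) | apply (Rbar_le_lt_trans _ t)];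
      try apply Hs; try apply Ht; simpl; lra.
  - rewrite Rmin_right, Rmax_left in Hx by lra.
    split; [apply (Rbar_lt_le_trans _ t) | apply (Rbar_le_lt_trans _ s)];
      try apply Hs; try apply Ht; simpl; lra.
Qed.

Lemma in_I_locally (t : R) : in_I a b t -> locally t (in_I a b).
Proof.
  apply (open_and (T := R_UniformSpace) (fun x : R => Rbar_lt a x) (fun x : R => Rbar_lt x b)).
  - apply open_Rbar_gt.
  - apply open_Rbar_lt.
Qed.

Lemma is_derive_0_const_on_I (f : R -> R) :
  (forall t, in_I a b t -> is_derive f t 0) ->
  forall s t, in_I a b s -> in_I a b t -> f s = f t.
Proof.
  intros Hf s t Hs Ht.
  assert (Hseg : forall x, Rmin s t <= x <= Rmax s t -> is_derive f x 0).
  { intros x Hx. apply Hf, (in_I_between s t); auto. }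
  destruct (MVT_gen f s t (fun _ => 0)) as [z [_ Hz]].
  - intros x Hx. apply Hseg; lra.
  - intros x Hx. apply derivable_continuous_pt.
    exists 0. apply is_derive_Reals, Hseg, Hx.
  - lra.
Qed.

Lemma Derive_ext_on_I (f g : R -> R) :
  (forall s, in_I a b s -> f s = g s) ->
  forall t, in_I a b t -> Derive f t = Derive g t.
Proof.
  intros Hfg t Ht. apply Derive_ext_loc.
  exact (filter_imp _ _ Hfg (in_I_locally t Ht)).
Qed.

Lemma Derive2_ext_on_I (f g : R -> R) :
  (forall s, in_I a b s -> f s = g s) ->
  forall t, in_I a b t -> Derive (Derive f) t = Derive (Derive g) t.
Proof. intros Hfg. apply Derive_ext_on_I, Derive_ext_on_I, Hfg. Qed.

End Interval.

Lemma Derive2_scal (k : R) (f : R -> R) (t : R) :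
  Derive (Derive (fun s => k * f s)) t = k * Derive (Derive f) t.
Proof.
  rewrite (Derive_ext _ (fun s => k * Derive f s)) by (intros; apply Derive_scal).
  apply Derive_scal.
Qed.

(* The product with f s turns a sign change of f into a decrease from
   f(s)^2 > 0 to a negative value, so a single IVT call suffices. *)
Lemma nonvanishing_same_sign (f : R -> R) (p q : R) :
  (forall t, p < t < q -> continuity_pt f t) ->
  (forall t, p < t < q -> f t <> 0) ->
  forall s t, p < s < q -> p < t < q -> 0 < f s * f t.
Proof.
  intros Hc Hnz.
  assert (Hlt : forall s t, p < s < q -> p < t < q -> s < t -> 0 < f s * f t).
  { intros s t Hs Ht Hst.
    assert (Hprod : f s * f t <> 0).
    { apply Rmult_integral_contrapositive; split; [apply Hnz, Hs | apply Hnz, Ht]. }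
    destruct (Rlt_or_le 0 (f s * f t)) as [Hpos | Hle]; [exact Hpos | exfalso].
    assert (Hfs2 : 0 < f s * f s) by (specialize (Hnz s Hs); nra).
    assert (Hcont : forall x, p < x < q -> continuity_pt (fun y => f s * f y) x).
    { intros x Hx. apply continuity_pt_mult; [apply continuity_pt_const; intros ? ? |]; auto. }
    destruct (IVT_Rbar_decr (fun y => f s * f y) (Finite s) (Finite t)
                (Finite (f s * f s)) (Finite (f s * f t)) 0)
      as [z [Hsz [Hzt Hz]]]; simpl.
    - apply (is_lim_continuity (fun y => f s * f y)), Hcont, Hs.
    - apply (is_lim_continuity (fun y => f s * f y)), Hcont, Ht.
    - intros x Hsx Hxt; apply Hcont; simpl in *; lra.
    - exact Hst.
    - lra.
    - simpl in *. apply Rmult_integral in Hz as [H0 | H0];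
        [apply (Hnz s) | apply (Hnz z)]; auto; lra. }
  intros s t Hs Ht.
  destruct (Rtotal_order s t) as [Hst | [-> | Hts]].
  - exact (Hlt s t Hs Ht Hst).
  - specialize (Hnz t Ht); nra.
  - rewrite Rmult_comm; exact (Hlt t s Ht Hs Hts).
Qed.

Lemma nonvanishing_sign (f : R -> R) (p q : R) :
  p < q ->
  (forall t, p < t < q -> continuity_pt f t) ->
  (forall t, p < t < q -> f t <> 0) ->
  exists e, (e = 1 \/ e = -1) /\ forall t, p < t < q -> Rabs (f t) = e * f t.
Proof.
  intros Hpq Hc Hnz.
  set (m := (p + q) / 2).
  assert (Hm : p < m < q) by (unfold m; lra).
  pose proof (nonvanishing_same_sign f p q Hc Hnz m) as Hsame.
  destruct (Rlt_or_le 0 (f m)) as [Hfm | Hfm].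
  - exists 1; split; [now left |]. intros t Ht.
    specialize (Hsame t Hm Ht). rewrite Rabs_pos_eq; nra.
  - exists (-1); split; [now right |]. intros t Ht.
    specialize (Hsame t Hm Ht). rewrite Rabs_left; nra.
Qed.

Lemma real_sign (c : R) : exists e, (e = 1 \/ e = -1) /\ Rabs c = e * c.
Proof.
  destruct (Rle_or_lt 0 c).
  - exists 1. rewrite Rabs_pos_eq by lra. split; [now left | ring].
  - exists (-1). rewrite Rabs_left by lra. split; [now right | ring].
Qed.

Lemma geod_curv_v_const (a b : Rbar) (u v : R -> R) (v0 : R) :
  (forall t, in_I a b t -> v t = v0) ->
  forall t, in_I a b t -> geod_curv u v t = 0.
Proof.
  intros Hv t Ht.
  assert (E1 : forall s, in_I a b s -> gam1 u v s = cos v0 * sinh (u s)).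
  { intros s Hs. unfold gam1. rewrite Hv by exact Hs. ring. }
  assert (E2 : forall s, in_I a b s -> gam2 u v s = sin v0 * sinh (u s)).
  { intros s Hs. unfold gam2. rewrite Hv by exact Hs. ring. }
  unfold geod_curv, det3.
  rewrite (Derive_ext_on_I _ _ _ _ E1 t Ht), (Derive2_ext_on_I _ _ _ _ E1 t Ht),
    (Derive_ext_on_I _ _ _ _ E2 t Ht), (Derive2_ext_on_I _ _ _ _ E2 t Ht),
    !Derive_scal, !Derive2_scal, E1, E2 by exact Ht.
  ring.
Qed.

Lemma geod_curv_u_const (a b : Rbar) (u v : R -> R) (u0 w : R) :
  (forall t, in_I a b t -> u t = u0) ->
  (forall t, in_I a b t -> is_derive v t w) ->
  forall t, in_I a b t -> geod_curv u v t = cosh u0 * sinh u0 ^ 2 * w ^ 3.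
Proof.
  intros Hu Hv t Ht.
  assert (Dcos : forall s, in_I a b s -> Derive (fun s => cos (v s)) s = - w * sin (v s)).
  { intros s Hs. apply is_derive_unique.
    evar_last; [apply (is_derive_comp cos v); [apply is_derive_cos | apply Hv, Hs] |].
    change (w * - sin (v s) = - w * sin (v s)); ring. }
  assert (Dsin : forall s, in_I a b s -> Derive (fun s => sin (v s)) s = w * cos (v s)).
  { intros s Hs. apply is_derive_unique.
    evar_last; [apply (is_derive_comp sin v); [apply is_derive_sin | apply Hv, Hs] |].
    reflexivity. }
  assert (E1 : forall s, in_I a b s -> gam1 u v s = sinh u0 * cos (v s)).
  { intros s Hs. unfold gam1. rewrite Hu by exact Hs. reflexivity. }
  assert (E2 : forall s, in_I a b s -> gam2 u v s = sinh u0 * sin (v s)).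
  { intros s Hs. unfold gam2. rewrite Hu by exact Hs. reflexivity. }
  assert (E3 : forall s, in_I a b s -> gam3 u v s = cosh u0 * 1).
  { intros s Hs. unfold gam3. rewrite Hu by exact Hs. ring. }
  unfold geod_curv, det3.
  rewrite (Derive_ext_on_I _ _ _ _ E1 t Ht), (Derive2_ext_on_I _ _ _ _ E1 t Ht),
    (Derive_ext_on_I _ _ _ _ E2 t Ht), (Derive2_ext_on_I _ _ _ _ E2 t Ht),
    (Derive_ext_on_I _ _ _ _ E3 t Ht), (Derive2_ext_on_I _ _ _ _ E3 t Ht),
    !Derive_scal, !Derive2_scal, E1, E2, E3 by exact Ht.
  rewrite (Derive_ext_on_I _ _ _ _ Dcos t Ht), (Derive_ext_on_I _ _ _ _ Dsin t Ht),
    !Derive_scal, Dcos, Dsin by exact Ht.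
  rewrite (Derive_ext (Derive (fun _ => 1)) (fun _ => 0)) by (intros; apply Derive_const).
  rewrite !Derive_const.
  pose proof (sin2_cos2 (v t)) as Hpyth. unfold Rsqr in Hpyth.
  transitivity (cosh u0 * sinh u0 ^ 2 * w ^ 3 * (sin (v t) * sin (v t) + cos (v t) * cos (v t)));
    [ring | rewrite Hpyth; ring].
Qed.

Lemma unit_speed_sq (a b : Rbar) (u v : R -> R) (t : R) :
  arc_length a b u v -> in_I a b t ->
  Derive u t ^ 2 + sinh (u t) ^ 2 * Derive v t ^ 2 = 1.
Proof.
  intros Harc Ht. specialize (Harc t Ht). unfold speed in Harc.
  rewrite <- (pow2_sqrt (Derive u t ^ 2 + sinh (u t) ^ 2 * Derive v t ^ 2)), Harc by nra.
  ring.
Qed.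

Lemma stationary_first_integral (alpha : R) (a b : Rbar) (u v : R -> R) :
  Rbar_lt a b -> arc_length a b u v -> alpha_stationary alpha a b u v ->
  exists c, forall t, in_I a b t -> Rpower (u t) alpha * sinh (u t) ^ 2 * Derive v t = c.
Proof.
  intros Hab Harc Hst.
  set (g := fun s => Rpower (u s) alpha * (sinh (u s)) ^ 2 * Derive v s / speed u v s).
  destruct (in_I_nonempty a b Hab) as [t0 Ht0].
  exists (g t0). intros t Ht.
  rewrite <- (is_derive_0_const_on_I a b g (fun s Hs => proj2 (Hst s Hs)) t t0 Ht Ht0).
  unfold g. rewrite (Harc t Ht). field.
Qed.

Lemma sinh_pos (x : R) : 0 < x -> 0 < sinh x.
Proof. intros Hx. rewrite <- sinh_0. apply sinh_lt, Hx. Qed.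

(* With P = u^alpha, S = sinh u, D = u', V = v': the first integral and the
   unit speed give P^2 S^2 - c^2 = (P S D)^2. *)
Lemma quadrature_identities (P S D V c e1 e2 : R) :
  0 < P -> 0 < S -> D <> 0 ->
  P * S ^ 2 * V = c -> D ^ 2 + S ^ 2 * V ^ 2 = 1 ->
  (e1 = 1 \/ e1 = -1) -> (e2 = 1 \/ e2 = -1) ->
  Rabs D = e1 * D -> Rabs c = e1 * e2 * c ->
  Rabs c ^ 2 < P ^ 2 * S ^ 2 /\
  / D = e1 * (P * S / sqrt (P ^ 2 * S ^ 2 - Rabs c ^ 2)) /\
  V / D = e2 * (Rabs c / (S * sqrt (P ^ 2 * S ^ 2 - Rabs c ^ 2))).
Proof.
  intros HP HS HD Hc Hunit He1 He2 HabsD Habsc.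
  assert (Hdisc : P ^ 2 * S ^ 2 - Rabs c ^ 2 = (P * S * D) ^ 2).
  { rewrite pow2_abs, <- Hc.
    replace ((P * S * D) ^ 2) with (P ^ 2 * S ^ 2 * D ^ 2) by ring.
    replace (D ^ 2) with (1 - S ^ 2 * V ^ 2) by lra. ring. }
  assert (Hsqrt : sqrt (P ^ 2 * S ^ 2 - Rabs c ^ 2) = P * S * (e1 * D)).
  { rewrite Hdisc, <- Rsqr_pow2, sqrt_Rsqr_abs, !Rabs_mult, (Rabs_pos_eq P), (Rabs_pos_eq S),
      HabsD by lra.
    reflexivity. }
  assert (HPSD : 0 < (P * S * D) ^ 2).
  { apply pow2_gt_0. apply Rmult_integral_contrapositive; split; [nra | exact HD]. }
  split; [lra |].
  rewrite Hsqrt, Habsc, <- Hc.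
  destruct He1 as [-> | ->], He2 as [-> | ->]; split; field; repeat split; lra.
Qed.

Section FirstIntegral.

Variables (alpha : R) (a b : Rbar) (u v : R -> R) (c : R).

Hypothesis Hab : Rbar_lt a b.
Hypothesis Hv : C2_on a b v.
Hypothesis Hu_pos : forall t, in_I a b t -> 0 < u t.
Hypothesis Hc : forall t, in_I a b t -> Rpower (u t) alpha * sinh (u t) ^ 2 * Derive v t = c.

Lemma Derive_v_first_integral (t : R) :
  in_I a b t -> Derive v t = c / (Rpower (u t) alpha * sinh (u t) ^ 2).
Proof.
  intros Ht. rewrite <- (Hc t Ht).
  assert (HP : 0 < Rpower (u t) alpha) by (unfold Rpower; apply exp_pos).
  assert (HS : 0 < sinh (u t)) by apply sinh_pos, Hu_pos, Ht.
  field; split; lra.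
Qed.

Lemma is_derive_v_first_integral (t : R) :
  in_I a b t -> is_derive v t (c / (Rpower (u t) alpha * sinh (u t) ^ 2)).
Proof.
  intros Ht. rewrite <- Derive_v_first_integral by exact Ht.
  apply Derive_correct, Hv, Ht.
Qed.

Lemma first_integral_neq0 : ~ constant_curvature a b u v -> c <> 0.
Proof.
  intros Hnc Hc0. apply Hnc. exists 0.
  destruct (in_I_nonempty a b Hab) as [t0 Ht0].
  apply (geod_curv_v_const a b u v (v t0)). intros t Ht.
  apply (is_derive_0_const_on_I a b v); [| exact Ht | exact Ht0].
  intros s Hs. pose proof (is_derive_v_first_integral s Hs) as Hd.
  rewrite Hc0, Rdiv_0_l in Hd. exact Hd.
Qed.

Lemma Derive_u_neq0_somewhere :
  C2_on a b u -> ~ constant_curvature a b u v ->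
  exists t, in_I a b t /\ Derive u t <> 0.
Proof.
  intros Hu Hnc. apply NNPP. intros Hnone. apply Hnc.
  destruct (in_I_nonempty a b Hab) as [t0 Ht0].
  assert (Hu0 : forall t, in_I a b t -> u t = u t0).
  { intros t Ht. apply (is_derive_0_const_on_I a b u); [| exact Ht | exact Ht0].
    intros s Hs. destruct (Req_dec (Derive u s) 0) as [H0 | H0].
    - rewrite <- H0. apply Derive_correct, Hu, Hs.
    - exfalso. apply Hnone. exists s. split; assumption. }
  set (w := c / (Rpower (u t0) alpha * sinh (u t0) ^ 2)).
  exists (cosh (u t0) * sinh (u t0) ^ 2 * w ^ 3).
  apply (geod_curv_u_const a b u v (u t0) w); [exact Hu0 |].
  intros t Ht. unfold w. rewrite <- (Hu0 t Ht). apply is_derive_v_first_integral, Ht.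
Qed.

End FirstIntegral.

Theorem theorem2p9 (alpha : R) (a b : Rbar) (u v : R -> R) :
  alpha <> 0 ->
  Rbar_lt a b ->
  C2_on a b u -> C2_on a b v ->
  (forall t, in_I a b t -> 0 < u t) ->
  arc_length a b u v ->
  alpha_stationary alpha a b u v ->
  ~ constant_curvature a b u v ->
  exists c : R, 0 < c /\
    (exists t, in_I a b t /\ Derive u t <> 0) /\
    forall p q : R, Rbar_le a p -> p < q -> Rbar_le q b ->
      (forall t, p < t < q -> Derive u t <> 0) ->
      exists e1 e2 : R, (e1 = 1 \/ e1 = -1) /\ (e2 = 1 \/ e2 = -1) /\
        forall t, p < t < q ->
          c ^ 2 < (Rpower (u t) alpha) ^ 2 * (sinh (u t)) ^ 2 /\
          / Derive u t =
            e1 * (Rpower (u t) alpha * sinh (u t)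
                  / sqrt ((Rpower (u t) alpha) ^ 2 * (sinh (u t)) ^ 2 - c ^ 2)) /\
          Derive v t / Derive u t =
            e2 * (c / (sinh (u t)
                  * sqrt ((Rpower (u t) alpha) ^ 2 * (sinh (u t)) ^ 2 - c ^ 2))).
Proof.
  intros _ Hab Hu Hv Hu_pos Harc Hst Hnc.
  destruct (stationary_first_integral alpha a b u v Hab Harc Hst) as [c Hc].
  exists (Rabs c). split; [apply Rabs_pos_lt, (first_integral_neq0 alpha a b u v c); assumption |].
  split; [apply (Derive_u_neq0_somewhere alpha a b u v c); assumption |].
  intros p q Hap Hpq Hqb Hnz.
  assert (HI : forall t, p < t < q -> in_I a b t) by (intros t; apply in_I_sub; assumption).
  destruct (nonvanishing_sign (Derive u) p q Hpq) as [e1 [He1 Hsign]]; [| exact Hnz |].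
  { intros t Ht. apply derivable_continuous_pt, ex_derive_Reals_0, Hu, HI, Ht. }
  destruct (real_sign c) as [ec [Hec Habsc]].
  exists e1, (e1 * ec).
  assert (He2 : e1 * ec = 1 \/ e1 * ec = -1).
  { destruct He1 as [-> | ->], Hec as [-> | ->]; [left | right | right | left]; ring. }
  split; [exact He1 | split; [exact He2 |]].
  intros t Ht. apply quadrature_identities; auto.
  - unfold Rpower; apply exp_pos.
  - apply sinh_pos, Hu_pos, HI, Ht.
  - apply (unit_speed_sq a b); auto.
  - rewrite Habsc. destruct He1 as [-> | ->]; ring.
Qed.
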